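(* Let $x>0$ and let $s\in\mathbb{Z}_+$ be a nonnegative integer. Then the Bessel function of the first kind $J_s$ satisfies $$ |J_s(x)|\le 2\sqrt{\frac{2}{\pi x}}\left(1+\frac{s}{x}\right)^{s}. $$ *)

From Stdlib Require Import Reals Arith Factorial.
From Coquelicot Require Import Coquelicot.
Open Scope R_scope.

Definition bessel_J (s : nat) (x : R) : R :=
  Series (fun m : nat =>
    (-1) ^ m / (INR (fact m) * INR (fact (m + s))) * (x / 2) ^ (2 * m + s)).

From Stdlib Require Import Reals Lra Lia Factorial.
From Coquelicot Require Import Coquelicot.
Open Scope R_scope.

(* For x >= 1 the function
     E(x) = x (J_0^2 + J_1^2) - J_0 J_1 + J_0^2 / (2x)
   has derivative -J_0^2 / (2x^2) <= 0 and dominates (x/2) (J_0^2 + J_1^2), so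
   bounding E(1) with truncated power series gives J_0^2 + J_1^2 <= 1.474 / x.
   The recurrence J_(n+2) = (2(n+1)/x) J_(n+1) - J_n multiplies J_n^2 + J_(n+1)^2
   by at most (1 + (2n+3)/x)^2 once x >= 3/2, and
   (1 + (2n+3)/x) (1 + (n+1)/x)^(n+1) <= (1 + (n+2)/x)^(n+2); this propagates
   J_n^2 + J_(n+1)^2 <= 2.2 (1 + n/x)^(2n) / x.  For small x the power series is
   dominated by a geometric one.  Finally 2.2 <= 8 / pi. *)

Definition bessel_coef (n m : nat) : R :=
  (-1) ^ m / (INR (fact m) * INR (fact (m + n))).

Definition bessel_H (n : nat) (y : R) : R := PSeries (bessel_coef n) y.

Lemma bessel_coef_neq0 n m : bessel_coef n m <> 0.
Proof.
  apply Rmult_integral_contrapositive; split.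
  - apply pow_nonzero; lra.
  - apply Rinv_neq_0_compat, Rmult_integral_contrapositive.
    split; apply INR_fact_neq_0.
Qed.

Lemma Rabs_bessel_coef_ratio n m :
  Rabs (bessel_coef n (S m) / bessel_coef n m) = / (INR (S m) * INR (S (m + n))).
Proof.
  unfold bessel_coef; simpl (S m + n)%nat.
  rewrite !fact_simpl, !mult_INR; simpl pow.
  pose proof (INR_fact_lt_0 m); pose proof (INR_fact_lt_0 (m + n)).
  pose proof (lt_0_INR (S m) ltac:(lia)); pose proof (lt_0_INR (S (m + n)) ltac:(lia)).
  assert ((-1) ^ m <> 0) by (apply pow_nonzero; lra).
  replace (_ / _) with (- / (INR (S m) * INR (S (m + n)))) by (field; lra).
  rewrite Rabs_Ropp, Rabs_pos_eq; [reflexivity |].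
  left; apply Rinv_0_lt_compat; nra.
Qed.

Lemma CV_radius_bessel_coef n : CV_radius (bessel_coef n) = p_infty.
Proof.
  apply CV_radius_infinite_DAlembert; [apply bessel_coef_neq0 |].
  apply is_lim_seq_ext with (fun m => / (INR (S m) * INR (S (m + n)))).
  { intros m; rewrite Rabs_bessel_coef_ratio; reflexivity. }
  apply is_lim_seq_le_le with (fun _ => 0) (fun m => / INR (S m)).
  - intros m.
    pose proof (lt_0_INR (S m) ltac:(lia)).
    assert (1 <= INR (S (m + n))) by (apply (le_INR 1); lia).
    split; [left; apply Rinv_0_lt_compat; nra | apply Rinv_le_contravar; nra].
  - apply is_lim_seq_const.
  - apply (is_lim_seq_incr_1 (fun m => / INR m)).
    change (Finite 0) with (Rbar_inv p_infty).
    apply is_lim_seq_inv; [apply is_lim_seq_INR | discriminate].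
Qed.

Lemma ex_pseries_bessel_coef n y : ex_pseries (bessel_coef n) y.
Proof. apply CV_radius_inside; rewrite CV_radius_bessel_coef; exact I. Qed.

Lemma bessel_J_eq_H n x : bessel_J n x = (x / 2) ^ n * bessel_H n ((x / 2) ^ 2).
Proof.
  unfold bessel_J, bessel_H, PSeries; rewrite <- Series_scal_l.
  apply Series_ext; intros m; unfold bessel_coef.
  rewrite pow_add, <- pow_mult.
  pose proof (INR_fact_lt_0 m); pose proof (INR_fact_lt_0 (m + n)).
  field; nra.
Qed.

Lemma bessel_coef_rec n m :
  PS_plus (bessel_coef n) (PS_incr_1 (bessel_coef (S (S n)))) m
  = INR (S n) * bessel_coef (S n) m.
Proof.
  unfold PS_plus, PS_incr_1; change plus with Rplus; unfold bessel_coef.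
  match goal with |- ?a = ?b => change (@eq R a b) end.
  destruct m as [|k].
  - cbn [Nat.add]; rewrite fact_simpl, mult_INR; simpl pow.
    change (INR (fact 0)) with 1; change zero with 0.
    pose proof (INR_fact_lt_0 n); pose proof (lt_0_INR (S n) ltac:(lia)).
    field; lra.
  - replace (S k + n)%nat with (S (k + n)) by lia.
    replace (k + S (S n))%nat with (S (S (k + n))) by lia.
    replace (S k + S n)%nat with (S (S (k + n))) by lia.
    rewrite !fact_simpl, !mult_INR; simpl pow.
    pose proof (INR_fact_lt_0 k); pose proof (INR_fact_lt_0 (k + n)).
    pose proof (lt_0_INR (S k) ltac:(lia)); pose proof (lt_0_INR (S (k + n)) ltac:(lia)).
    pose proof (lt_0_INR (S (S (k + n))) ltac:(lia)).
    rewrite (S_INR (S (k + n))), (S_INR (k + n)), S_INR, plus_INR in *.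
    rewrite (S_INR n); field; lra.
Qed.

Lemma bessel_H_rec n y :
  bessel_H n y + y * bessel_H (S (S n)) y = INR (S n) * bessel_H (S n) y.
Proof.
  unfold bessel_H; rewrite <- PSeries_incr_1, <- PSeries_plus, <- PSeries_scal.
  - apply PSeries_ext, bessel_coef_rec.
  - apply ex_pseries_bessel_coef.
  - apply ex_pseries_incr_1, ex_pseries_bessel_coef.
Qed.

Lemma bessel_J_rec n x : x <> 0 ->
  bessel_J (S (S n)) x = 2 * INR (S n) / x * bessel_J (S n) x - bessel_J n x.
Proof.
  intros hx; rewrite !bessel_J_eq_H.
  pose proof (bessel_H_rec n ((x / 2) ^ 2)).
  simpl pow in *; field_simplify; [| lra].
  nra.
Qed.

Lemma PS_derive_bessel_coef_0 m : PS_derive (bessel_coef 0) m = - bessel_coef 1 m.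
Proof.
  unfold PS_derive, bessel_coef; rewrite !Nat.add_0_r, Nat.add_1_r, fact_simpl.
  rewrite mult_INR; simpl pow.
  pose proof (INR_fact_lt_0 m); pose proof (lt_0_INR (S m) ltac:(lia)).
  field; lra.
Qed.

Lemma PS_derive_bessel_coef_1 m :
  PS_incr_1 (PS_derive (bessel_coef 1)) m = bessel_coef 0 m - bessel_coef 1 m.
Proof.
  unfold PS_incr_1, PS_derive, bessel_coef; destruct m as [|k];
    match goal with |- ?a = ?b => change (@eq R a b) end.
  - change zero with 0; simpl; field.
  - rewrite !Nat.add_0_r, !Nat.add_1_r, !fact_simpl, !mult_INR; simpl pow.
    pose proof (INR_fact_lt_0 k); pose proof (lt_0_INR (S k) ltac:(lia)).
    rewrite (S_INR (S k)); field; lra.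
Qed.

Lemma is_derive_bessel_H_0 y : is_derive (bessel_H 0) y (- bessel_H 1 y).
Proof.
  replace (- bessel_H 1 y) with (PSeries (PS_derive (bessel_coef 0)) y).
  { apply is_derive_PSeries; rewrite CV_radius_bessel_coef; exact I. }
  rewrite (PSeries_ext _ (PS_scal (-1) (bessel_coef 1))), PSeries_scal.
  - unfold bessel_H, scal; simpl; unfold mult; simpl; ring.
  - intros m; rewrite PS_derive_bessel_coef_0.
    unfold PS_scal, scal; simpl; unfold mult; simpl; ring.
Qed.

Lemma bessel_H_1_derive y :
  y * PSeries (PS_derive (bessel_coef 1)) y = bessel_H 0 y - bessel_H 1 y.
Proof.
  rewrite <- PSeries_incr_1; unfold bessel_H; rewrite <- PSeries_minus.
  - apply PSeries_ext, PS_derive_bessel_coef_1.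
  - apply ex_pseries_bessel_coef.
  - apply ex_pseries_bessel_coef.
Qed.

Lemma is_derive_half_sq x : is_derive (fun t => (t / 2) ^ 2) x (x / 2).
Proof. auto_derive; [exact I | field]. Qed.

Lemma is_derive_bessel_J_0 x : is_derive (bessel_J 0) x (- bessel_J 1 x).
Proof.
  apply is_derive_ext with (fun t => bessel_H 0 ((t / 2) ^ 2)).
  { intros t; rewrite bessel_J_eq_H; simpl; ring. }
  rewrite bessel_J_eq_H.
  replace (- _) with (scal (x / 2) (- bessel_H 1 ((x / 2) ^ 2)))
    by (unfold scal; simpl; unfold mult; simpl; ring).
  apply (is_derive_comp (bessel_H 0)); [apply is_derive_bessel_H_0 | apply is_derive_half_sq].
Qed.

Lemma is_derive_bessel_J_1 x : x <> 0 ->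
  is_derive (bessel_J 1) x (bessel_J 0 x - bessel_J 1 x / x).
Proof.
  intros hx.
  apply is_derive_ext with (fun t => t / 2 * bessel_H 1 ((t / 2) ^ 2)).
  { intros t; rewrite bessel_J_eq_H; simpl; ring. }
  set (y := (x / 2) ^ 2); set (dH := PSeries (PS_derive (bessel_coef 1)) y).
  replace (bessel_J 0 x - bessel_J 1 x / x)
    with (1 / 2 * bessel_H 1 y + x / 2 * scal (x / 2) dH).
  - apply (is_derive_mult (fun t => t / 2) (fun t => bessel_H 1 ((t / 2) ^ 2))).
    + auto_derive; [exact I | field].
    + apply (is_derive_comp (bessel_H 1)); [| apply is_derive_half_sq].
      apply is_derive_PSeries; rewrite CV_radius_bessel_coef; exact I.
    + intros; apply Rmult_comm.
  - rewrite !bessel_J_eq_H; fold y.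
    pose proof (bessel_H_1_derive y) as E; fold dH in E.
    unfold scal; simpl; unfold mult; simpl.
    replace (x / 2 * (x / 2 * dH)) with (y * dH) by (unfold y; ring).
    rewrite E; field; exact hx.
Qed.

Definition bessel_energy (x : R) : R :=
  x * (bessel_J 0 x ^ 2 + bessel_J 1 x ^ 2) - bessel_J 0 x * bessel_J 1 x
  + bessel_J 0 x ^ 2 / (2 * x).

Lemma is_derive_bessel_energy x : 0 < x ->
  is_derive bessel_energy x (- bessel_J 0 x ^ 2 / (2 * x ^ 2)).
Proof.
  intros hx; unfold bessel_energy.
  pose proof (is_derive_bessel_J_0 x) as D0.
  pose proof (is_derive_bessel_J_1 x ltac:(lra)) as D1.
  auto_derive.
  - repeat split; try (eexists; eassumption); lra.
  - change (fun t => bessel_J 0 t) with (bessel_J 0).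
    change (fun t => bessel_J 1 t) with (bessel_J 1).
    rewrite (is_derive_unique _ _ _ D0), (is_derive_unique _ _ _ D1).
    field; lra.
Qed.

Lemma bessel_energy_le_1 x : 1 <= x -> bessel_energy x <= bessel_energy 1.
Proof.
  intros hx; destruct (Req_dec x 1) as [-> | hne]; [lra |].
  destruct (MVT_gen bessel_energy 1 x (fun t => - bessel_J 0 t ^ 2 / (2 * t ^ 2)))
    as [c [hc e]].
  - intros t ht; rewrite Rmin_left in ht by lra; apply is_derive_bessel_energy; lra.
  - intros t ht; rewrite Rmin_left in ht by lra.
    apply continuity_pt_filterlim, (@ex_derive_continuous R_AbsRing R_NormedModule).
    eexists; apply is_derive_bessel_energy; lra.
  - rewrite Rmin_left, Rmax_right in hc by lra.
    assert (0 <= bessel_J 0 c ^ 2 / (2 * c ^ 2)).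
    { apply Rmult_le_pos; [apply pow2_ge_0 | left; apply Rinv_0_lt_compat; nra]. }
    unfold Rdiv in *; rewrite <- Ropp_mult_distr_l in e; nra.
Qed.

Lemma Rabs_bessel_coef_le_1 n m : Rabs (bessel_coef n m) <= 1.
Proof.
  unfold bessel_coef, Rdiv.
  rewrite Rabs_mult, <- RPow_abs, Rabs_m1, pow1, Rmult_1_l.
  assert (1 <= INR (fact m)) by apply (le_INR 1), lt_O_fact.
  assert (1 <= INR (fact (m + n))) by apply (le_INR 1), lt_O_fact.
  rewrite Rabs_inv, Rabs_pos_eq by nra.
  rewrite <- Rinv_1; apply Rinv_le_contravar; nra.
Qed.

Lemma Rabs_bessel_H_tail_le n y N : 0 <= y < 1 ->
  Rabs (Series (fun k => bessel_coef n (N + k) * y ^ (N + k))) <= y ^ N / (1 - y).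
Proof.
  intros hy.
  assert (G : is_series (fun k => y ^ N * y ^ k) (y ^ N * / (1 - y))).
  { apply (is_series_scal_l (y ^ N) (fun k => y ^ k)), is_series_geom.
    rewrite Rabs_pos_eq; lra. }
  assert (B : forall k, 0 <= Rabs (bessel_coef n (N + k) * y ^ (N + k)) <= y ^ N * y ^ k).
  { intros k; split; [apply Rabs_pos |].
    rewrite Rabs_mult, <- pow_add, (Rabs_pos_eq (y ^ (N + k))) by (apply pow_le; lra).
    pose proof (Rabs_bessel_coef_le_1 n (N + k)); pose proof (pow_le y (N + k) ltac:(lra)).
    nra. }
  eapply Rle_trans; [apply Series_Rabs |].
  - apply (@ex_series_le R_AbsRing R_CompleteNormedModule _ (fun k => y ^ N * y ^ k)).
    + intros k; unfold norm; simpl; unfold abs; simpl; rewrite Rabs_Rabsolu; apply B.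
    + eexists; exact G.
  - eapply Rle_trans.
    + apply (Series_le _ (fun k => y ^ N * y ^ k)); [exact B | eexists; exact G].
    + rewrite (is_series_unique _ _ G); unfold Rdiv; lra.
Qed.

Lemma Rabs_bessel_J_le n x b : 0 < x <= b -> b < 2 ->
  Rabs (bessel_J n x) <= 1 / (1 - (b / 2) ^ 2).
Proof.
  intros hx hb; rewrite bessel_J_eq_H, Rabs_mult.
  assert (hxb : (x / 2) ^ 2 <= (b / 2) ^ 2) by (apply pow_incr; lra).
  assert (hb2 : (b / 2) ^ 2 < 1) by nra.
  assert (hy : 0 <= (x / 2) ^ 2 < 1) by (split; [apply pow2_ge_0 | lra]).
  pose proof (Rabs_bessel_H_tail_le n ((x / 2) ^ 2) 0 hy) as T.
  rewrite pow_O in T; change (Series _) with (bessel_H n ((x / 2) ^ 2)) in T.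
  assert (1 / (1 - (x / 2) ^ 2) <= 1 / (1 - (b / 2) ^ 2))
    by (unfold Rdiv; rewrite !Rmult_1_l; apply Rinv_le_contravar; lra).
  assert (Rabs ((x / 2) ^ n) <= 1).
  { rewrite <- RPow_abs, Rabs_pos_eq, <- (pow1 n) by lra; apply pow_incr; lra. }
  pose proof (Rabs_pos (bessel_H n ((x / 2) ^ 2))); nra.
Qed.

Lemma bessel_H_truncation n y : 0 <= y < 1 ->
  Rabs (bessel_H n y - sum_f_R0 (fun k => bessel_coef n k * y ^ k) 5) <= y ^ 6 / (1 - y).
Proof.
  intros hy.
  assert (E : bessel_H n y = sum_f_R0 (fun k => bessel_coef n k * y ^ k) 5
                             + Series (fun k => bessel_coef n (6 + k) * y ^ (6 + k))).
  { unfold bessel_H, PSeries; rewrite (Series_incr_n _ 6); [reflexivity | lia |].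
    generalize (ex_pseries_bessel_coef n y); unfold ex_pseries; apply ex_series_ext.
    intros k; rewrite pow_n_pow; unfold scal; simpl; unfold mult; simpl; ring. }
  rewrite E; replace (_ + _ - _) with (Series (fun k => bessel_coef n (6 + k) * y ^ (6 + k)))
    by ring.
  apply Rabs_bessel_H_tail_le, hy.
Qed.

Lemma bessel_J_0_1_at_1_bounds :
  0.7648 <= bessel_J 0 1 <= 0.7656 /\ 0.4398 <= bessel_J 1 1 <= 0.4403.
Proof.
  rewrite !bessel_J_eq_H; replace ((1 / 2) ^ 2) with (1 / 4) by field.
  pose proof (bessel_H_truncation 0 (1 / 4) ltac:(lra)) as B0.
  pose proof (bessel_H_truncation 1 (1 / 4) ltac:(lra)) as B1.
  unfold bessel_coef in B0, B1; simpl sum_f_R0 in B0, B1; simpl fact in B0, B1.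
  apply Rabs_le_between in B0; apply Rabs_le_between in B1.
  simpl pow in *; lra.
Qed.

Lemma bessel_energy_1_le : bessel_energy 1 <= 0.7366.
Proof.
  destruct bessel_J_0_1_at_1_bounds as [[a1 a2] [b1 b2]]; unfold bessel_energy.
  replace (2 * 1) with 2 by ring; nra.
Qed.

Lemma bessel_J_0_1_sq_le x : 1 <= x -> bessel_J 0 x ^ 2 + bessel_J 1 x ^ 2 <= 1.474 / x.
Proof.
  intros hx; pose proof (bessel_energy_le_1 x hx); pose proof bessel_energy_1_le.
  unfold bessel_energy in *.
  assert (0 <= bessel_J 0 x ^ 2 / (2 * x)).
  { apply Rmult_le_pos; [apply pow2_ge_0 | left; apply Rinv_0_lt_compat; lra]. }
  pose proof (pow2_ge_0 (bessel_J 0 x - bessel_J 1 x)).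
  assert (0 <= (x - 1) * (bessel_J 0 x ^ 2 + bessel_J 1 x ^ 2)).
  { apply Rmult_le_pos; [lra |].
    pose proof (pow2_ge_0 (bessel_J 0 x)); pose proof (pow2_ge_0 (bessel_J 1 x)); lra. }
  apply (Rmult_le_reg_l x); [lra |].
  replace (x * (1.474 / x)) with 1.474 by (field; lra); nra.
Qed.

Definition admissible_factor (R c : R) : Prop :=
  1 < R /\ c ^ 2 <= (R - 1) * (R - 1 - c ^ 2).

Lemma sq_sum_rotation_le R c p q : admissible_factor R c ->
  q ^ 2 + (c * q - p) ^ 2 <= R * (p ^ 2 + q ^ 2).
Proof.
  intros [hR hc].
  (* Completing the square in the quadratic form (R - 1) p^2 + 2 c p q + (R - 1 - c^2) q^2. *)
  assert (E : (R - 1) * (R * (p ^ 2 + q ^ 2) - q ^ 2 - (c * q - p) ^ 2)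
              = ((R - 1) * p + c * q) ^ 2 + ((R - 1) * (R - 1 - c ^ 2) - c ^ 2) * q ^ 2)
    by ring.
  assert (0 <= ((R - 1) * (R - 1 - c ^ 2) - c ^ 2) * q ^ 2)
    by (apply Rmult_le_pos; [lra | apply pow2_ge_0]).
  pose proof (pow2_ge_0 ((R - 1) * p + c * q)).
  apply (Rmult_le_reg_l (R - 1)); nra.
Qed.

Definition bessel_sq_sum (n : nat) (x : R) : R := bessel_J n x ^ 2 + bessel_J (S n) x ^ 2.

Lemma bessel_sq_sum_succ_le n x R : 0 < x -> admissible_factor R (2 * INR (S n) / x) ->
  bessel_sq_sum (S n) x <= R * bessel_sq_sum n x.
Proof.
  intros hx hR; unfold bessel_sq_sum; rewrite bessel_J_rec by lra.
  apply sq_sum_rotation_le, hR.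
Qed.

Lemma admissible_factor_first_step a : 0 < a <= 1 ->
  admissible_factor (14641 / 10000 * (1 + a) ^ 2) (2 * a).
Proof.
  intros ha; split; [nra |].
  assert (a ^ 2 <= a) by nra; assert (a ^ 3 <= a ^ 2) by nra; assert (a ^ 4 <= a ^ 3) by nra.
  assert (0 <= a ^ 3) by (apply pow_le; lra); assert (0 <= a ^ 4) by (apply pow_le; lra).
  set (R := 14641 / 10000 * (1 + a) ^ 2).
  assert (E : (R - 1) * (R - 1 - (2 * a) ^ 2) - (2 * a) ^ 2
    = 21538881 / 100000000 + 67948881 / 25000000 * a + 203846643 / 50000000 * a ^ 2
      - 78461119 / 25000000 * a ^ 3 - 371281119 / 100000000 * a ^ 4) by (unfold R; field).
  lra.
Qed.

Lemma admissible_factor_step u a : 3 <= u -> 0 < a <= 2 / 3 ->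
  admissible_factor ((1 + u * a) ^ 2) ((u + 1) * a).
Proof.
  intros hu ha; split; [nra |].
  assert (E : ((1 + u * a) ^ 2 - 1) * ((1 + u * a) ^ 2 - 1 - ((u + 1) * a) ^ 2)
              - ((u + 1) * a) ^ 2
              = a ^ 2 * ((u - 1 - u * a) * (3 * u + 1 + u * (2 * u + 1) * a))) by ring.
  assert (0 <= (u - 1 - u * a) * (3 * u + 1 + u * (2 * u + 1) * a))
    by (apply Rmult_le_pos; nra).
  assert (0 <= a ^ 2 * ((u - 1 - u * a) * (3 * u + 1 + u * (2 * u + 1) * a)))
    by (apply Rmult_le_pos; [apply pow2_ge_0 | assumption]).
  lra.
Qed.

Lemma pow_add_ge_binomial_head P a n : 0 <= P -> 0 <= a ->
  P ^ S n + INR (S n) * a * P ^ n <= (P + a) ^ S n.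
Proof.
  intros hP ha; induction n as [|n IH]; [simpl; lra |].
  change ((P + a) ^ S (S n)) with ((P + a) * (P + a) ^ S n).
  assert ((P + a) * (P ^ S n + INR (S n) * a * P ^ n) <= (P + a) * (P + a) ^ S n)
    by (apply Rmult_le_compat_l; lra).
  assert (0 <= a * a * INR (S n) * P ^ n)
    by (pose proof (pos_INR (S n)); pose proof (pow_le P n hP);
        repeat apply Rmult_le_pos; lra).
  rewrite S_INR; simpl pow in *; nra.
Qed.

Lemma bernoulli_step s a : 0 <= a ->
  (1 + INR (2 * s + 1) * a) * (1 + INR s * a) ^ s <= (1 + INR (S s) * a) ^ S s.
Proof.
  intros ha; set (P := 1 + INR s * a).
  assert (hP : 1 <= P) by (unfold P; pose proof (pos_INR s); nra).
  replace (1 + INR (S s) * a) with (P + a) by (unfold P; rewrite S_INR; ring).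
  replace (1 + INR (2 * s + 1) * a) with (P + INR (S s) * a)
    by (unfold P; rewrite plus_INR, mult_INR, S_INR; simpl; ring).
  pose proof (pow_add_ge_binomial_head P a s ltac:(lra) ha).
  simpl pow in *; nra.
Qed.

Lemma pow_one_add_INR_div_ge_1 n x : 0 < x -> 1 <= (1 + INR n / x) ^ n.
Proof.
  intros hx; apply pow_R1_Rle; pose proof (pos_INR n).
  assert (0 <= INR n / x) by (apply Rdiv_le_0_compat; lra); lra.
Qed.

Lemma bessel_sq_sum_1_le x : 1 <= x ->
  bessel_sq_sum 1 x <= 2.2 * ((1 + INR 1 / x) ^ 1) ^ 2 / x.
Proof.
  intros hx; unfold Rdiv; set (a := / x).
  assert (ha : 0 < a <= 1).
  { split; [apply Rinv_0_lt_compat; lra |].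
    rewrite <- Rinv_1; apply Rinv_le_contravar; lra. }
  pose proof (bessel_J_0_1_sq_le x hx) as B0; unfold Rdiv in B0; fold a in B0.
  (* 14641 / 10000 = 1.1 ^ 4, and 1.1 ^ 4 * 1.474 < 2.2. *)
  eapply Rle_trans.
  - apply (bessel_sq_sum_succ_le 0 x (14641 / 10000 * (1 + a) ^ 2)); [lra |].
    unfold Rdiv; fold a; simpl INR; rewrite Rmult_1_r.
    apply admissible_factor_first_step, ha.
  - assert (0 <= (1 + a) ^ 2) by apply pow2_ge_0.
    unfold bessel_sq_sum in *; simpl INR; simpl pow in *; nra.
Qed.

Lemma bessel_sq_sum_le_small n x : 0 < x < 3 / 2 -> bessel_sq_sum n x <= 11.
Proof.
  intros hx.
  pose proof (Rabs_bessel_J_le n x (3 / 2) ltac:(lra) ltac:(lra)).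
  pose proof (Rabs_bessel_J_le (S n) x (3 / 2) ltac:(lra) ltac:(lra)).
  replace (1 / (1 - (3 / 2 / 2) ^ 2)) with (16 / 7) in * by field.
  unfold bessel_sq_sum; rewrite <- (pow2_abs (bessel_J n x)), <- (pow2_abs (bessel_J (S n) x)).
  pose proof (Rabs_pos (bessel_J n x)); pose proof (Rabs_pos (bessel_J (S n) x)); nra.
Qed.

Lemma bessel_sq_bound_ge_11 n x : 1 <= x < 3 / 2 ->
  11 <= 2.2 * ((1 + INR (S (S n)) / x) ^ S (S n)) ^ 2 / x.
Proof.
  intros hx; unfold Rdiv; set (a := / x).
  assert (ha : 2 / 3 <= a).
  { unfold a; replace (2 / 3) with (/ (3 / 2)) by field.
    apply Rinv_le_contravar; lra. }
  set (b := 1 + INR (S (S n)) * a).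
  assert (hb : 7 / 3 <= b) by (unfold b; rewrite !S_INR; pose proof (pos_INR n); nra).
  assert (b ^ 2 <= b ^ S (S n)) by (apply Rle_pow; [lra | lia]).
  assert ((7 / 3) ^ 2 <= b ^ 2) by (apply pow_incr; lra).
  nra.
Qed.

Lemma bessel_sq_sum_step_large n x : 3 / 2 <= x ->
  bessel_sq_sum (S n) x <= 2.2 * ((1 + INR (S n) / x) ^ S n) ^ 2 / x ->
  bessel_sq_sum (S (S n)) x <= 2.2 * ((1 + INR (S (S n)) / x) ^ S (S n)) ^ 2 / x.
Proof.
  intros hx IH; unfold Rdiv in *; set (a := / x) in *.
  assert (ha : 0 < a <= 2 / 3).
  { split; [apply Rinv_0_lt_compat; lra |].
    unfold a; replace (2 / 3) with (/ (3 / 2)) by field.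
    apply Rinv_le_contravar; lra. }
  set (u := INR (2 * S n + 1)).
  assert (hun : u = 2 * INR n + 3).
  { unfold u; replace (2 * S n + 1)%nat with (2 * n + 3)%nat by lia.
    rewrite plus_INR, mult_INR; simpl; ring. }
  assert (hu : 3 <= u) by (pose proof (pos_INR n); lra).
  pose proof (bernoulli_step (S n) a ltac:(lra)) as Bern; fold u in Bern.
  set (P := (1 + INR (S n) * a) ^ S n) in *.
  assert (0 <= P) by (apply pow_le; pose proof (pos_INR (S n)); nra).
  assert (((1 + u * a) * P) ^ 2 <= ((1 + INR (S (S n)) * a) ^ S (S n)) ^ 2)
    by (apply pow_incr; split; [apply Rmult_le_pos |]; nra).
  eapply Rle_trans.
  - apply (bessel_sq_sum_succ_le (S n) x ((1 + u * a) ^ 2)); [lra |].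
    replace (2 * INR (S (S n)) / x) with ((u + 1) * a)
      by (unfold a; rewrite hun, !S_INR; field; lra).
    apply admissible_factor_step; assumption.
  - assert ((1 + u * a) ^ 2 * bessel_sq_sum (S n) x <= (1 + u * a) ^ 2 * (2.2 * P ^ 2 * a))
      by (apply Rmult_le_compat_l; [apply pow2_ge_0 | exact IH]).
    nra.
Qed.

Lemma bessel_sq_sum_le n x : 1 <= x ->
  bessel_sq_sum n x <= 2.2 * ((1 + INR n / x) ^ n) ^ 2 / x.
Proof.
  intros hx; induction n as [|[|n] IH].
  - pose proof (bessel_J_0_1_sq_le x hx); pose proof (Rinv_0_lt_compat x ltac:(lra)).
    unfold bessel_sq_sum, Rdiv in *; simpl pow; lra.
  - apply bessel_sq_sum_1_le, hx.
  - destruct (Rlt_or_le x (3 / 2)) as [hsmall | hlarge].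
    + pose proof (bessel_sq_sum_le_small (S (S n)) x ltac:(lra)).
      pose proof (bessel_sq_bound_ge_11 n x (conj hx hsmall)); lra.
    + apply bessel_sq_sum_step_large; assumption.
Qed.

Lemma bessel_J_sq_le s x : 0 < x ->
  bessel_J s x ^ 2 <= 2.2 * ((1 + INR s / x) ^ s) ^ 2 / x.
Proof.
  intros hx; destruct (Rlt_or_le x 1) as [hsmall | hlarge].
  - pose proof (Rabs_bessel_J_le s x 1 ltac:(lra) ltac:(lra)).
    replace (1 / (1 - (1 / 2) ^ 2)) with (4 / 3) in * by field.
    pose proof (pow_one_add_INR_div_ge_1 s x hx).
    assert (1 <= / x) by (rewrite <- Rinv_1; apply Rinv_le_contravar; lra).
    rewrite <- pow2_abs; pose proof (Rabs_pos (bessel_J s x)).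
    unfold Rdiv; nra.
  - pose proof (bessel_sq_sum_le s x hlarge); unfold bessel_sq_sum in *.
    pose proof (pow2_ge_0 (bessel_J (S s) x)); lra.
Qed.

Lemma PI_le_3_6 : PI <= 3.6.
Proof. destruct (PI_ineq 1) as [_ h]; unfold tg_alt, PI_tg in h; simpl in h; lra. Qed.

Theorem lemma3 (x : R) (s : nat) (hx : 0 < x) :
  Rabs (bessel_J s x) <= 2 * sqrt (2 / (PI * x)) * (1 + INR s / x) ^ s.
Proof.
  pose proof (bessel_J_sq_le s x hx) as B; pose proof (pow_one_add_INR_div_ge_1 s x hx).
  set (P := (1 + INR s / x) ^ s) in *.
  pose proof PI_le_3_6; pose proof PI_RGT_0.
  assert (hq : 0 < 2 / (PI * x)) by (apply Rdiv_lt_0_compat; nra).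
  assert (E : Rsqr (2 * sqrt (2 / (PI * x)) * P) = 8 / PI * (P ^ 2 / x)).
  { rewrite !Rsqr_mult, Rsqr_sqrt by lra; unfold Rsqr; field; lra. }
  assert (2.2 <= 8 / PI).
  { apply (Rmult_le_reg_r PI); [lra |]; unfold Rdiv; rewrite Rmult_assoc, Rinv_l; lra. }
  assert (0 <= P ^ 2 / x) by (apply Rdiv_le_0_compat; [apply pow2_ge_0 | lra]).
  apply Rsqr_incr_0_var; [| pose proof (sqrt_lt_R0 _ hq); nra].
  rewrite <- Rsqr_abs, E; unfold Rsqr; simpl pow in *; nra.
Qed.
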